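(* Let $k\ge 2$, $p\in(0,1)$, $q=1-p$. For all $n\ge 1$, $$M^{(k)}_n(p)=(k-1)n-\frac pq\sum_{i=0}^{n-1}\big(1-f^{(k)}_i\big).$$
   Context: Matchbox process: fix integers $k\ge 2$, $n\ge 1$ and $p\in(0,1)$, $q=1-p$. Initially $k$ boxes each contain $n$ matches. At each time step, independently, with probability $p$ a match is removed from a box currently containing the largest number of matches, and with probability $q$ from a box currently containing the smallest number (ties broken arbitrarily). The process is run until some box first becomes empty; the residue is the total number of matches in the other $k-1$ boxes at that time, and $M^{(k)}_n(p)$ is its expectation. Let $s^{(k)}_i=\frac{k-1}{ki-1}\binom{ki-1}{i-1}$ ($i\ge1$), $S^{(k)}(z)=\sum_{i\ge1}s^{(k)}_iz^i$, and define $f^{(k)}_0,f^{(k)}_1,\dots$ by the formal power series identity $\sum_{i\ge0}f^{(k)}_iz^i=\dfrac{1}{1-\frac1qS^{(k)}(p^{k-1}qz)}$. ($f^{(k)}_i$ is the probability that the process is in a state with all boxes equal after $ki$ steps.) *)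

From mathcomp Require Import all_boot all_order all_algebra.
Set Implicit Arguments. Unset Strict Implicit. Unset Printing Implicit Defensive.
Import Order.TTheory GRing.Theory Num.Theory.
Local Open Scope ring_scope.

(* A state of the matchbox process: the list of box contents (length k). *)
Definition maxbox (s : seq nat) : nat := foldr maxn 0%N s.
Definition minbox (s : seq nat) : nat := foldr minn (head 0%N s) s.

Definition take_from (s : seq nat) (i : nat) : seq nat :=
  set_nth 0%N s i (nth 0%N s i).-1.

(* ties broken by choosing the first box achieving the max / min *)
Definition step_max (s : seq nat) : seq nat := take_from s (index (maxbox s) s).
Definition step_min (s : seq nat) : seq nat := take_from s (index (minbox s) s).

(* Expected residue starting from state s, by first-step analysis; [fuel]
   bounds the number of remaining steps (each step removes one match, so
   fuel = total number of matches suffices). *)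
Fixpoint exp_residue (R : realFieldType) (p : R) (fuel : nat) (s : seq nat) : R :=
  match fuel with
  | 0%N => (sumn s)%:R
  | fuel'.+1 =>
      if (0%N \in s) then (sumn s)%:R
      else p * exp_residue p fuel' (step_max s)
           + (1 - p) * exp_residue p fuel' (step_min s)
  end.

Definition M (R : realFieldType) (k n : nat) (p : R) : R :=
  exp_residue p (k * n) (nseq k n).

Definition s_coef (R : realFieldType) (k i : nat) : R :=
  (k.-1)%:R / (k * i).-1%:R * ('C((k * i).-1, i.-1))%:R.

(* coefficient of z^j in 1 - (1/q) S^(k)(p^(k-1) q z), q = 1 - p *)
Definition denom_coef (R : realFieldType) (k : nat) (p : R) (j : nat) : R :=
  if j == 0%N then 1
  else - ((1 - p)^-1 * s_coef R k j * (p ^+ k.-1 * (1 - p)) ^+ j).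

(* f is the coefficient sequence of 1/(1 - (1/q) S^(k)(p^(k-1) q z)),
   i.e. (sum_i f_i z^i) * (1 - (1/q) S(p^(k-1) q z)) = 1 as formal power series *)
Definition is_f_seq (R : realFieldType) (k : nat) (p : R) (f : nat -> R) : Prop :=
  forall m : nat,
    \sum_(i < m.+1) f i * denom_coef k p (m - i) = (m == 0%N)%:R.

(* A state matters only through its minimum L and its excess D = sumn s - k L:
   a max-step lowers D by one, a min-step lowers L and raises D by k - 1, and
   from a balanced state (D = 0) both steps lead to (L - 1, k - 1).  First-step
   analysis therefore identifies M with any V (L, D) satisfying V (0, D) = D and
   the two induced recurrences.  Between balanced states the excess is a walk
   with steps -1 (probability p) and +(k - 1) (probability q) whose first-passage
   probabilities are generalised ballot numbers; from k - 1 their generating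
   function is S(p^(k-1) q z) / q, so f is the renewal sequence of balanced
   returns.  With Phi (L, D) the expected number of balanced visits,
   V (L, D) = k L + D - (L - p Phi (L, D)) / q satisfies the recurrences, and
   V (n, 0) is the claimed formula. *)

From mathcomp Require Import all_boot all_order all_algebra.
From mathcomp Require Import zify ring.
Import Order.TTheory GRing.Theory Num.Theory.

Set Implicit Arguments.
Unset Strict Implicit.
Unset Printing Implicit Defensive.

Lemma foldr_selection_mem (T : eqType) (op : T -> T -> T) :
  (forall x y, op x y = x \/ op x y = y) -> forall a s, foldr op a s \in a :: s.
Proof.
move=> op_sel a; elim=> [|x s IH] /=; first exact: mem_head.
have [->|->] := op_sel x (foldr op a s); first by rewrite !inE eqxx orbT.
by move: IH; rewrite !inE => /orP[->|->]; rewrite ?orbT.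
Qed.

Lemma minn_selection m n : minn m n = m \/ minn m n = n.
Proof. by rewrite /minn; case: ltnP; [left | right]. Qed.

Lemma maxn_selection m n : maxn m n = m \/ maxn m n = n.
Proof. by rewrite /maxn; case: ltnP; [right | left]. Qed.

Lemma foldr_minn_leq a s y : y \in s -> (foldr minn a s <= y)%N.
Proof.
elim: s => //= x s IH; rewrite inE geq_min => /orP[/eqP->|/IH->].
  by rewrite leqnn.
by rewrite orbT.
Qed.

Lemma foldr_maxn_geq a s y : y \in s -> (y <= foldr maxn a s)%N.
Proof.
elim: s => //= x s IH; rewrite inE leq_max => /orP[/eqP->|/IH->].
  by rewrite leqnn.
by rewrite orbT.
Qed.

Lemma minbox_leq s y : y \in s -> (minbox s <= y)%N.
Proof. exact: foldr_minn_leq. Qed.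

Lemma maxbox_geq s y : y \in s -> (y <= maxbox s)%N.
Proof. exact: foldr_maxn_geq. Qed.

Lemma minbox_mem s : s != [::] -> minbox s \in s.
Proof.
case: s => [|x s] // _; change (foldr minn x (x :: s) \in x :: s).
have := foldr_selection_mem minn_selection x (x :: s).
by rewrite inE => /orP[/eqP ->|//]; rewrite mem_head.
Qed.

Lemma maxbox_mem s : s != [::] -> maxbox s \in s.
Proof.
case: s => [|x s] // _; have := foldr_selection_mem maxn_selection 0%N (x :: s).
rewrite inE -/(maxbox _) => /orP[/eqP max0|//]; rewrite max0.
have := maxbox_geq (mem_head x s); rewrite max0 leqn0 => /eqP <-.
exact: mem_head.
Qed.

Lemma minbox_leq_maxbox s : s != [::] -> (minbox s <= maxbox s)%N.
Proof. by move/minbox_mem/maxbox_geq. Qed.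

Lemma minbox_eq s m : m \in s -> {in s, forall y, m <= y}%N -> minbox s = m.
Proof.
move=> sm m_le; have s_ne : s != [::] by case: s sm {m_le}.
by apply/eqP; rewrite eqn_leq minbox_leq // m_le ?minbox_mem.
Qed.

Lemma sumn_geq_mul s m : {in s, forall y, m <= y}%N -> (size s * m <= sumn s)%N.
Proof.
elim: s => //= x s IH m_le; rewrite mulSn leq_add ?m_le ?mem_head //.
by apply: IH => y sy; rewrite m_le // inE sy orbT.
Qed.

Lemma sumn_leq_mul s m : {in s, forall y, y <= m}%N -> (sumn s <= size s * m)%N.
Proof.
elim: s => //= x s IH le_m; rewrite mulSn leq_add ?le_m ?mem_head //.
by apply: IH => y sy; rewrite le_m // inE sy orbT.
Qed.

Lemma sumn_gt_mul s m y :
  {in s, forall z, m <= z}%N -> y \in s -> (m < y)%N -> (size s * m < sumn s)%N.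
Proof.
elim: s => //= x s IH m_le; have m_le_s : {in s, forall z, m <= z}%N.
  by move=> z sz; rewrite m_le // inE sz orbT.
rewrite inE mulSn => /orP[/eqP-> my|sy my].
  by rewrite -addSn leq_add // sumn_geq_mul.
by rewrite -addnS leq_add ?m_le ?mem_head // IH.
Qed.

Lemma size_take_from s i : (i < size s)%N -> size (take_from s i) = size s.
Proof. by move=> lt_i; rewrite /take_from size_set_nth (maxn_idPr lt_i). Qed.

Lemma nth_take_from s i j :
  nth 0 (take_from s i) j = if j == i then (nth 0 s i).-1 else nth 0 s j.
Proof. by rewrite /take_from nth_set_nth /= eq_sym. Qed.

Lemma sumn_take_from s i :
  (i < size s)%N -> (0 < nth 0 s i)%N -> sumn (take_from s i) = (sumn s).-1.
Proof.
move=> lt_i si_gt0; rewrite /take_from sumn_set_nth_ltn //.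
suff : (nth 0 s i <= sumn s)%N by lia.
by rewrite sumnE (big_nth 0) big_mkord (bigD1 (Ordinal lt_i)) //= leq_addr.
Qed.

Lemma mem_take_from s i y :
  (i < size s)%N -> y \in take_from s i -> y = (nth 0 s i).-1 \/ y \in s.
Proof.
move=> lt_i /(nthP 0%N) [j]; rewrite size_take_from // nth_take_from => lt_j <-.
by case: eqP => _; [left | right; apply: mem_nth].
Qed.

Lemma minbox_take_from s i : (i < size s)%N ->
  minbox (take_from s i) =
    if nth 0 s i == minbox s then (minbox s).-1 else minbox s.
Proof.
move=> lt_i; have s_ne : s != [::] by case: s lt_i.
have mem_i : (nth 0 s i).-1 \in take_from s i.
  by apply/(nthP 0%N); exists i; rewrite ?size_take_from // nth_take_from eqxx.
have le_i := minbox_leq (mem_nth 0 lt_i).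
case: eqP => [si_min|si_ne].
  apply: minbox_eq; first by rewrite -si_min.
  by move=> y /(mem_take_from lt_i) [->|/minbox_leq]; lia.
apply: minbox_eq; last first.
  have lt_si : (minbox s < nth 0 s i)%N.
    by rewrite ltn_neqAle le_i andbT eq_sym; apply/eqP.
  move=> y /(mem_take_from lt_i) [->|/minbox_leq //].
  by rewrite -ltnS (ltn_predK lt_si).
have lt_j : (index (minbox s) s < size s)%N by rewrite index_mem minbox_mem.
apply/(nthP 0%N); exists (index (minbox s) s); rewrite ?size_take_from //.
rewrite nth_take_from nth_index ?minbox_mem //; case: eqP => // ji.
by case: si_ne; rewrite -ji nth_index ?minbox_mem.
Qed.

Lemma size_step_max s : s != [::] -> size (step_max s) = size s.
Proof. by move=> s_ne; rewrite size_take_from // index_mem maxbox_mem. Qed.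

Lemma size_step_min s : s != [::] -> size (step_min s) = size s.
Proof. by move=> s_ne; rewrite size_take_from // index_mem minbox_mem. Qed.

Lemma minbox_gt0 s : s != [::] -> 0%N \notin s -> (0 < minbox s)%N.
Proof.
move=> s_ne s_n0; rewrite lt0n.
by apply: contraNneq s_n0 => <-; apply: minbox_mem.
Qed.

Lemma sumn_step_max s :
  s != [::] -> 0%N \notin s -> sumn (step_max s) = (sumn s).-1.
Proof.
move=> s_ne s_n0; rewrite sumn_take_from ?index_mem ?maxbox_mem //.
rewrite nth_index ?maxbox_mem //.
exact: leq_trans (minbox_gt0 s_ne s_n0) (minbox_leq_maxbox s_ne).
Qed.

Lemma sumn_step_min s :
  s != [::] -> 0%N \notin s -> sumn (step_min s) = (sumn s).-1.
Proof.
move=> s_ne s_n0; rewrite sumn_take_from ?index_mem ?minbox_mem //.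
by rewrite nth_index ?minbox_mem ?minbox_gt0.
Qed.

Lemma minbox_step_min s : s != [::] -> minbox (step_min s) = (minbox s).-1.
Proof.
move=> s_ne; rewrite minbox_take_from ?index_mem ?minbox_mem //.
by rewrite nth_index ?minbox_mem ?eqxx.
Qed.

Lemma minbox_step_max s : s != [::] ->
  minbox (step_max s) = if maxbox s == minbox s then (minbox s).-1 else minbox s.
Proof.
move=> s_ne; rewrite minbox_take_from ?index_mem ?maxbox_mem //.
by rewrite nth_index ?maxbox_mem.
Qed.

Local Open Scope ring_scope.

Section FirstStepAnalysis.

Variables (R : realFieldType) (p : R) (k : nat) (V : nat -> nat -> R).
Hypotheses (k_gt0 : (0 < k)%N)
  (V_empty : forall D, V 0%N D = D%:R)
  (V_balanced : forall L, V L.+1 0%N = V L k.-1)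
  (V_unbalanced :
    forall L D, V L.+1 D.+1 = p * V L.+1 D + (1 - p) * V L (D + k)).

Lemma exp_residue_eq_value fuel s : size s = k -> (sumn s <= fuel)%N ->
  exp_residue p fuel s = V (minbox s) (sumn s - k * minbox s).
Proof.
elim: fuel s => [|fuel IH] s size_s le_sum /=.
  have /eqP -> : minbox s == 0%N.
    by have := sumn_geq_mul (@minbox_leq s); rewrite size_s; nia.
  by rewrite V_empty muln0 subn0.
case: ifPn => [s0|s_n0].
  have /eqP -> : minbox s == 0%N by rewrite -leqn0 minbox_leq.
  by rewrite V_empty muln0 subn0.
have s_ne : s != [::] by rewrite -size_eq0 size_s -lt0n.
have [L min_s] : exists L, minbox s = L.+1.
  by exists (minbox s).-1; rewrite prednK ?minbox_gt0.
have sum_ge := sumn_geq_mul (@minbox_leq s); rewrite size_s min_s in sum_ge.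
rewrite !IH ?size_step_max ?size_step_min ?sumn_step_max ?sumn_step_min //;
  try lia.
rewrite minbox_step_max // minbox_step_min // min_s /=.
case: eqP => [max_min|/eqP max_ne].
  have sum_eq : sumn s = (k * L.+1)%N.
    apply/eqP; rewrite eqn_leq sum_ge andbT -size_s -max_min.
    exact: sumn_leq_mul (@maxbox_geq s).
  have -> : ((sumn s).-1 - k * L = k.-1)%N by lia.
  by rewrite sum_eq subnn V_balanced; ring.
have sum_gt : (k * L.+1 < sumn s)%N.
  rewrite -size_s -min_s; apply: sumn_gt_mul (@minbox_leq s) (maxbox_mem s_ne) _.
  by rewrite ltn_neqAle minbox_leq_maxbox // min_s eq_sym max_ne.
have [D exc_s] : exists D, (sumn s - k * L.+1 = D.+1)%N.
  by exists (sumn s - k * L.+1).-1; lia.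
have -> : ((sumn s).-1 - k * L.+1 = D)%N by lia.
have -> : ((sumn s).-1 - k * L = D + k)%N by nia.
by rewrite exc_s V_unbalanced.
Qed.

End FirstStepAnalysis.

Section RandomWalk.

Variables (R : realFieldType) (k : nat) (p : R).
Hypothesis k_gt0 : (0 < k)%N.

(* By the cycle lemma, [ballot D u] counts the paths from D down to 0, staying
   positive before the end, made of u steps +(k - 1) and D + (k - 1) u
   steps -1. *)
Definition ballot (D u : nat) : R :=
  if D == 0%N then (u == 0%N)%:R
  else D%:R / (D + k * u)%:R * 'C(D + k * u, u)%:R.

Lemma ballot_0 D : ballot D 0 = 1.
Proof.
rewrite /ballot; case: eqP => // /eqP D_neq0.
by rewrite muln0 addn0 bin0 mulr1 divff // pnatr_eq0.
Qed.

Lemma ballotS D u :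
  ballot D u.+1 = D%:R / (D + k * u.+1)%:R * 'C(D + k * u.+1, u.+1)%:R.
Proof. by rewrite /ballot; case: eqP => // ->; rewrite !mul0r. Qed.

Lemma ballotSS D u : ballot D.+1 u.+1 = ballot D u.+1 + ballot (D + k) u.
Proof.
rewrite !ballotS /ballot addn_eq0 [k == 0%N]eqn0Ngt k_gt0 andbF.
set T := (D + k * u.+1)%N.
have -> : (D.+1 + k * u.+1 = T.+1)%N by rewrite /T; lia.
have -> : (D + k + k * u = T)%N by rewrite /T; lia.
have T_neq0 : T%:R != 0 :> R by rewrite pnatr_eq0 /T; lia.
have u1_neq0 : u.+1%:R != 0 :> R by rewrite pnatr_eq0.
have T1_neq0 : T.+1%:R != 0 :> R by rewrite pnatr_eq0.
have binT : 'C(T, u.+1)%:R = (T%:R - u%:R) / u.+1%:R * 'C(T, u)%:R :> R.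
  apply: (mulfI u1_neq0); rewrite -natrM mul_bin_left natrM natrB.
    by field; rewrite nat1r.
  by rewrite /T; nia.
rewrite binS natrD binT.
have ED : D%:R = T%:R - k%:R * (u%:R + 1) :> R.
  by rewrite /T natrD natrM -natr1; ring.
rewrite -!natr1 natrD ED.
by field; rewrite !natr1 T_neq0 u1_neq0 T1_neq0.
Qed.

(* The probability that the excess, started at D, first reaches 0 after
   exactly u min-steps. *)
Definition passage_prob (D u : nat) : R :=
  ballot D u * p ^+ (D + k.-1 * u) * (1 - p) ^+ u.

Lemma passage_prob00 : passage_prob 0 0 = 1.
Proof. by rewrite /passage_prob ballot_0 muln0 !expr0 !mulr1. Qed.

Lemma passage_prob0S u : passage_prob 0 u.+1 = 0.
Proof. by rewrite /passage_prob ballotS !mul0r. Qed.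

Lemma passage_probS0 D : passage_prob D.+1 0 = p * passage_prob D 0.
Proof.
by rewrite /passage_prob !ballot_0 !muln0 !addn0 exprS !mul1r !expr0 !mulr1.
Qed.

Lemma passage_probSS D u : passage_prob D.+1 u.+1 =
  p * passage_prob D u.+1 + (1 - p) * passage_prob (D + k) u.
Proof.
rewrite /passage_prob ballotSS.
have -> : (D.+1 + k.-1 * u.+1 = (D + k.-1 * u.+1).+1)%N by lia.
have -> : (D + k + k.-1 * u = (D + k.-1 * u.+1).+1)%N by nia.
by rewrite !exprS; ring.
Qed.

End RandomWalk.

Section RenewalSequence.

Variables (R : realFieldType) (k : nat) (p : R) (f : nat -> R).
Hypotheses (k_ge2 : (2 <= k)%N) (q_neq0 : 1 - p != 0).

Lemma denom_coefS u : denom_coef k p u.+1 = - passage_prob k p k.-1 u.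
Proof.
rewrite /denom_coef /s_coef /passage_prob /ballot /=.
have -> : (k.-1 == 0%N) = false by apply/eqP; lia.
have -> : (k * u.+1).-1 = (k.-1 + k * u)%N by nia.
have -> : (k.-1 + k.-1 * u = k.-1 * u.+1)%N by nia.
rewrite exprMn -exprM exprS; field.
by rewrite q_neq0 andbT -natrM -natrD pnatr_eq0; lia.
Qed.

Hypothesis f_seq : is_f_seq k p f.

Lemma f_seq0 : f 0%N = 1.
Proof. by have := f_seq 0; rewrite big_ord1 /denom_coef /= mulr1 => ->. Qed.

(* A balanced state after k (m + 1) steps is reached from a last earlier
   balanced state, at time k i, by a first passage with m - i min-steps. *)
Lemma f_seqS m :
  f m.+1 = \sum_(i < m.+1) f i * passage_prob k p k.-1 (m - i).
Proof.
have := f_seq m.+1.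
rewrite big_ord_recr /= subnn [denom_coef _ _ 0]/denom_coef mulr1.
under eq_bigr => i _.
  rewrite (subSn (leq_ord i)) denom_coefS mulrN.
  over.
by rewrite sumrN addrC => /eqP; rewrite subr_eq0 => /eqP.
Qed.

End RenewalSequence.

Section ResidueValue.

Variables (R : realFieldType) (k : nat) (p : R) (f : nat -> R).
Hypotheses (k_ge2 : (2 <= k)%N) (q_neq0 : 1 - p != 0).

(* The expected number of balanced states with positive minimum visited from
   a state with minimum L and excess D: the excess first vanishes after u
   min-steps, at minimum L - u, with probability [passage_prob k p D u]. *)
Definition balanced_visits (L D : nat) : R :=
  \sum_(u < L) passage_prob k p D u * \sum_(i < L - u) f i.

Lemma balanced_visits_0 D : balanced_visits 0 D = 0.
Proof. by rewrite /balanced_visits big_ord0. Qed.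

Lemma balanced_visits_balanced L : balanced_visits L 0 = \sum_(i < L) f i.
Proof.
case: L => [|L]; first by rewrite balanced_visits_0 big_ord0.
rewrite /balanced_visits big_ord_recl passage_prob00 mul1r subn0.
by rewrite [X in _ + X]big1 ?addr0 // => u _; rewrite passage_prob0S mul0r.
Qed.

Lemma balanced_visitsSS L D : balanced_visits L.+1 D.+1 =
  p * balanced_visits L.+1 D + (1 - p) * balanced_visits L (D + k).
Proof.
rewrite /balanced_visits [LHS]big_ord_recl [X in p * X]big_ord_recl /=.
rewrite passage_probS0 -mulrA mulrDr -addrA; congr (_ + _).
rewrite !mulr_sumr -big_split; apply: eq_bigr => u _.
rewrite /bump leq0n add1n subSS passage_probSS; last lia.
by rewrite /= mulrDl !mulrA.
Qed.

Hypothesis f_seq : is_f_seq k p f.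

(* A balanced state of positive level is visited once, and then the walk
   restarts from minimum L and excess k - 1. *)
Lemma balanced_visits_renewal L :
  \sum_(i < L.+1) f i = 1 + balanced_visits L k.-1.
Proof.
elim: L => [|L IH].
  by rewrite big_ord1 (f_seq0 f_seq) balanced_visits_0 addr0.
rewrite big_ord_recr /= IH /balanced_visits big_ord_recr /= subSnn big_ord1.
under [X in _ = 1 + (X + _)]eq_bigr => u _.
  rewrite (subSn (ltnW (ltn_ord u))) big_ord_recr /= mulrDr.
  over.
rewrite big_split /= -!addrA; congr (_ + (_ + _)).
rewrite (f_seqS k_ge2 q_neq0 f_seq) (reindex_inj rev_ord_inj) big_ord_recr /=.
rewrite subnn (f_seq0 f_seq) mul1r subn0 mulr1; congr (_ + _).
by apply: eq_bigr => u _; rewrite subSS subKn 1?mulrC // ltnW.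
Qed.

Definition residue_value (L D : nat) : R :=
  (k * L + D)%:R - (L%:R - p * balanced_visits L D) / (1 - p).

Lemma residue_value_empty D : residue_value 0 D = D%:R.
Proof.
by rewrite /residue_value balanced_visits_0 muln0 add0n mulr0 subr0 mul0r subr0.
Qed.

Lemma residue_value_balanced L : residue_value L.+1 0 = residue_value L k.-1.
Proof.
rewrite /residue_value balanced_visits_balanced balanced_visits_renewal.
have -> : (k * L.+1 + 0 = (k * L + k.-1).+1)%N by nia.
by rewrite -!natr1; field; exact: q_neq0.
Qed.

Lemma residue_value_unbalanced L D : residue_value L.+1 D.+1 =
  p * residue_value L.+1 D + (1 - p) * residue_value L (D + k).
Proof.
rewrite /residue_value balanced_visitsSS.
have -> : (k * L + (D + k) = k * L.+1 + D)%N by nia.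
by rewrite addnS -!natr1; field; exact: q_neq0.
Qed.

End ResidueValue.

Theorem proposition3p4 (R : realFieldType) (k : nat) (p : R) (f : nat -> R) :
  (2 <= k)%N -> 0 < p -> p < 1 -> is_f_seq k p f ->
  forall n : nat, (1 <= n)%N ->
    M k n p = (k.-1)%:R * n%:R - p / (1 - p) * \sum_(i < n) (1 - f i).
Proof.
move=> k_ge2 _ p_lt1 f_seq n _.
have q_neq0 : 1 - p != 0 by rewrite subr_eq0 eq_sym lt_eqF.
have k_gt0 : (0 < k)%N by lia.
have min_nseq : minbox (nseq k n) = n.
  apply: minbox_eq => [|y]; first by rewrite mem_nseq eqxx andbT.
  by rewrite mem_nseq => /andP[_ /eqP ->].
rewrite /M (exp_residue_eq_value (V := residue_value k p f) k_gt0) //.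
- rewrite sumn_nseq min_nseq mulnC subnn /residue_value balanced_visits_balanced.
  rewrite addn0 sumrB sumr_const card_ord natrM -subn1 natrB //.
  by field.
- exact: residue_value_empty.
- exact: residue_value_balanced.
- exact: residue_value_unbalanced.
- by rewrite size_nseq.
- by rewrite sumn_nseq mulnC.
Qed.
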